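(* For all finite posets $P$ and $Q$, $$\operatorname{g\text{-}set}(P/Q)=\operatorname{g\text{-}set}(Q)\cup\{\operatorname{mex}_i(\operatorname{g\text{-}set}(Q)) : i\in\operatorname{g\text{-}set}(P)\}.$$
   Context: For a finite poset $P$ and $x\in P$ let $P_x:=\{y\in P: x\not\le y\}$. The g-number is defined recursively by $g(P):=\operatorname{mex}\{g(P_x):x\in P\}$ and the g-set by $\operatorname{g\text{-}set}(P):=\{g(P_x):x\in P\}$, where for a finite $A\subseteq\mathbb N$, $\operatorname{mex}A=\operatorname{mex}_0A$ is the least natural number not in $A$, and $\operatorname{mex}_iA:=\min(\mathbb N\setminus(A\cup\{\operatorname{mex}_0A,\dots,\operatorname{mex}_{i-1}A\}))$ is the $i$-th (0-indexed) least natural number not in $A$. The series union $P/Q$ is the disjoint union of $P$ and $Q$ with their orders kept and every point of $P$ placed above every point of $Q$. *)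

From mathcomp Require Import all_boot.
Set Implicit Arguments. Unset Strict Implicit. Unset Printing Implicit Defensive.

(* mex s = least natural number not in s (it lies in 0..size s). *)
Definition mex (s : seq nat) : nat :=
  find (fun n => n \notin s) (iota 0 (size s).+1).

Fixpoint mexs (s : seq nat) (i : nat) : seq nat :=
  if i is i'.+1 then rcons (mexs s i') (mex (s ++ mexs s i')) else [::].

Definition mexi (s : seq nat) (i : nat) : nat := mex (s ++ mexs s i).

Definition is_poset (T : Type) (le : rel T) : Prop :=
  [/\ reflexive le, antisymmetric le & transitive le].

Section G.
Variables (T : finType) (le : rel T).

Definition Psub (A : {set T}) (x : T) : {set T} := [set y in A | ~~ le x y].

(* g-number with fuel; with fuel >= #|A| it computes g(A), since #|A_x| < #|A|
   for x in A. *)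
Fixpoint gnum_fuel (n : nat) (A : {set T}) : nat :=
  if n is n'.+1 then mex [seq gnum_fuel n' (Psub A x) | x <- enum A] else 0.

Definition gnum (A : {set T}) : nat := gnum_fuel #|A| A.

Definition gset (A : {set T}) : seq nat := [seq gnum (Psub A x) | x <- enum A].
End G.

(* Series union P/Q on the disjoint union P + Q: every point of P is above
   every point of Q. *)
Definition series_le (TP TQ : Type) (leP : rel TP) (leQ : rel TQ) : rel (TP + TQ) :=
  fun a b =>
    match a, b with
    | inl x, inl y => leP x y
    | inr x, inr y => leQ x y
    | inr _, inl _ => true
    | inl _, inr _ => false
    end.

(* In P/Q, removing the up-set of a point y of Q leaves Q_y, and removing the
   up-set of a point x of P leaves P_x/Q.  So g-set(B/C) is g-set(C) together
   with the numbers g(B_x/C), and by induction g(B/C) = mex_{g(B)}(g-set(C)):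
   since i |-> mex_i(S) enumerates the complement of S increasingly, adjoining
   {mex_i(S) : i in G} to S gives a set whose mex is mex_{mex G}(S). *)
From mathcomp Require Import all_boot.

Set Implicit Arguments.
Unset Strict Implicit.
Unset Printing Implicit Defensive.

Lemma mex_notin s : mex s \notin s.
Proof.
have has_notin : has [pred n | n \notin s] (iota 0 (size s).+1).
  apply/negPn/negP => /hasPn all_in.
  have := uniq_leq_size (iota_uniq 0 (size s).+1) (fun n nI => negbNE (all_in n nI)).
  by rewrite size_iota ltnn.
have lt_mex : mex s < (size s).+1.
  by rewrite -[X in _ < X](size_iota 0) -has_find.
by have := nth_find 0 has_notin; rewrite nth_iota.
Qed.

Lemma mex_minimal s n : n < mex s -> n \in s.
Proof.
move=> lt_n_mex; have := before_find 0 lt_n_mex.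
rewrite nth_iota ?add0n => [/negbFE //|].
by apply: leq_trans lt_n_mex _; rewrite -[X in _ <= X](size_iota 0) find_size.
Qed.

Lemma mex_unique s k : k \notin s -> (forall n, n < k -> n \in s) -> mex s = k.
Proof.
move=> k_notin below_k; case: (ltngtP (mex s) k) => // [/below_k|/mex_minimal].
  by rewrite (negbTE (mex_notin s)).
by rewrite (negbTE k_notin).
Qed.

Lemma mexi0 s : mexi s 0 = mex s.
Proof. by rewrite /mexi cats0. Qed.

Lemma mexsE s i : mexs s i = map (mexi s) (iota 0 i).
Proof.
elim: i => [//|i IH].
by rewrite [mexs _ _.+1]/= -addn1 iotaD map_cat IH cats1 /mexi IH.
Qed.

Lemma mexi_notin s i : mexi s i \notin s.
Proof. by have := mex_notin (s ++ mexs s i); rewrite mem_cat negb_or => /andP[]. Qed.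

Lemma mexiS s i : mexi s i < mexi s i.+1.
Proof.
rewrite ltnNge; apply/negP => le_next.
have := mex_notin (s ++ mexs s i.+1); rewrite /= mem_cat mem_rcons inE.
move: le_next; rewrite /mexi /= leq_eqVlt => /orP[/eqP->|/mex_minimal].
  by rewrite eqxx orbT.
by rewrite mem_cat => /orP[]->; rewrite ?orbT.
Qed.

Lemma mexi_mono s : {mono mexi s : i j / i < j}.
Proof. exact/leqW_mono/leq_mono/(homo_ltn ltn_trans (mexiS s)). Qed.

Lemma mexi_inj s : injective (mexi s).
Proof. exact/incn_inj/leq_mono/(homo_ltn ltn_trans (mexiS s)). Qed.

Lemma leq_mexi s i : i <= mexi s i.
Proof. by elim: i => // i IH; apply: leq_ltn_trans IH (mexiS s i). Qed.

Lemma mexi_onto s n : n \notin s -> exists j, mexi s j = n.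
Proof.
move=> n_notin; have : n < mexi s n.+1 by exact: leq_trans (leq_mexi s n.+1).
move/mex_minimal; rewrite mem_cat (negbTE n_notin) mexsE => /mapP[j _ ->].
by exists j.
Qed.

Lemma mex_cat_mexi (s G t : seq nat) :
  t =i s ++ map (mexi s) G -> mex t = mexi s (mex G).
Proof.
move=> def_t; apply: mex_unique.
  by rewrite def_t mem_cat negb_or mexi_notin (mem_map (@mexi_inj s)) mex_notin.
move=> n lt_n; rewrite def_t mem_cat.
have [//|/mexi_onto[j def_n]] := boolP (n \in s).
by rewrite -def_n (mem_map (@mexi_inj s)) mex_minimal // -(mexi_mono s) def_n.
Qed.

Section GNumber.
Variables (T : finType) (le : rel T).
Hypothesis le_refl : reflexive le.

Lemma card_Psub (A : {set T}) x : x \in A -> #|Psub le A x| < #|A|.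
Proof.
move=> Ax; rewrite (cardsD1 x A) Ax add1n ltnS; apply: subset_leq_card.
apply/subsetP => y; rewrite !inE => /andP[Ay not_le_xy]; rewrite Ay andbT.
by apply: contraNneq not_le_xy => ->.
Qed.

Lemma gnum_fuel_enough n m (A : {set T}) :
  #|A| <= n -> #|A| <= m -> gnum_fuel le n A = gnum_fuel le m A.
Proof.
have fuel_set0 k : gnum_fuel le k set0 = 0 by case: k => //= k; rewrite enum_set0.
elim: n m A => [|n IH] [|m] A; rewrite ?leqn0 ?cards_eq0.
- by [].
- by move=> /eqP-> _; rewrite fuel_set0.
- by move=> _ /eqP->; rewrite fuel_set0.
move=> le_An le_Am /=; congr mex; apply/eq_in_map => x; rewrite mem_enum => Ax.
by apply: IH; rewrite -ltnS; apply: leq_trans (card_Psub Ax) _.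
Qed.

Lemma gnumE (A : {set T}) : gnum le A = mex (gset le A).
Proof.
rewrite /gnum (@gnum_fuel_enough _ #|A|.+1) //=.
congr mex; apply/eq_in_map => x; rewrite mem_enum => Ax.
exact: gnum_fuel_enough (ltnW (card_Psub Ax)) _.
Qed.

Lemma gnum_set0 : gnum le set0 = 0.
Proof. by rewrite /gnum cards0. Qed.

End GNumber.

Section Series.
Variables (TP TQ : finType) (leP : rel TP) (leQ : rel TQ).
Hypotheses (leP_refl : reflexive leP) (leQ_refl : reflexive leQ).
Local Notation le := (series_le leP leQ).

Lemma series_le_refl : reflexive le.
Proof. by case. Qed.

Definition series_set (B : {set TP}) (C : {set TQ}) : {set TP + TQ} :=
  [set z | match z with inl x => x \in B | inr y => y \in C end].

Lemma Psub_series_inl B C x :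
  Psub le (series_set B C) (inl x) = series_set (Psub leP B x) C.
Proof. by apply/setP => -[y|y]; rewrite !inE //= andbT. Qed.

Lemma Psub_series_inr B C y :
  Psub le (series_set B C) (inr y) = series_set set0 (Psub leQ C y).
Proof. by apply/setP => -[z|z]; rewrite !inE //= andbF. Qed.

Lemma perm_enum_series B C :
  perm_eq (enum (series_set B C)) (map inl (enum B) ++ map inr (enum C)).
Proof.
apply: uniq_perm; first exact: enum_uniq.
  rewrite cat_uniq !(map_inj_uniq inl_inj, map_inj_uniq inr_inj) !enum_uniq andbT.
  by apply/hasPn => _ /mapP[y _ ->]; apply/mapP => -[].
case=> [x|y]; rewrite mem_cat mem_enum inE.
  have /negbTE-> : inl x \notin map inr (enum C) by apply/mapP => -[].
  by rewrite orbF (mem_map inl_inj) mem_enum.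
have /negbTE-> : inr y \notin map inl (enum B) by apply/mapP => -[].
by rewrite (mem_map inr_inj) mem_enum.
Qed.

Lemma perm_gset_series_split B C :
  perm_eq (gset le (series_set B C))
    ([seq gnum le (series_set (Psub leP B x) C) | x <- enum B]
     ++ [seq gnum le (series_set set0 (Psub leQ C y)) | y <- enum C]).
Proof.
apply: perm_trans (perm_map _ (perm_enum_series B C)) _.
rewrite map_cat -!map_comp.
under eq_map do rewrite /= Psub_series_inl.
under [X in _ ++ X]eq_map do rewrite /= Psub_series_inr.
exact: perm_refl.
Qed.

Lemma perm_gset_series B C :
  perm_eq (gset le (series_set B C))
    (gset leQ C ++ map (mexi (gset leQ C)) (gset leP B)).
Proof.
have [n] := ubnP (#|B| + #|C|); elim: n B C => // n IH B C; rewrite ltnS => size_le.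
have gnum_series (B' : {set TP}) (C' : {set TQ}) :
    #|B'| + #|C'| < n ->
    gnum le (series_set B' C') = mexi (gset leQ C') (gnum leP B').
  move=> /IH/perm_mem def_gset.
  by rewrite (gnumE series_le_refl) (gnumE leP_refl); apply: mex_cat_mexi.
apply: perm_trans (perm_gset_series_split B C) _.
have -> : [seq gnum le (series_set (Psub leP B x) C) | x <- enum B]
          = map (mexi (gset leQ C)) (gset leP B).
  rewrite -map_comp; apply/eq_in_map => x; rewrite mem_enum => Bx.
  by rewrite gnum_series //; apply: leq_trans size_le; rewrite ltn_add2r card_Psub.
have -> : [seq gnum le (series_set set0 (Psub leQ C y)) | y <- enum C] = gset leQ C.
  apply/eq_in_map => y; rewrite mem_enum => Cy.
  rewrite gnum_series ?gnum_set0 ?mexi0 -?(gnumE leQ_refl) //.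
  by apply: leq_trans size_le; rewrite cards0 add0n ltn_addl ?card_Psub.
by rewrite perm_catC.
Qed.

End Series.

Theorem mainTheorem6 (TP TQ : finType) (leP : rel TP) (leQ : rel TQ)
  (hP : is_poset leP) (hQ : is_poset leQ) :
  gset (series_le leP leQ) [set: TP + TQ]
  =i [pred n | (n \in gset leQ [set: TQ])
               || (n \in [seq mexi (gset leQ [set: TQ]) i | i <- gset leP [set: TP]])].
Proof.
case: hP hQ => [leP_refl _ _] [leQ_refl _ _] n.
have -> : [set: TP + TQ] = series_set setT setT by apply/setP => -[x|y]; rewrite !inE.
by rewrite (perm_mem (perm_gset_series leP_refl leQ_refl _ _)) mem_cat.
Qed.
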